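(* For every integer $n\ge 1$, the functional $$F_n=\sum_{i=1}^{n}\sum_{j=1}^{n+1-i}e_{i,j}^*\in\mathfrak{gl}(n)^*$$ is regular on $\mathfrak{gl}(n)$; that is, $\dim\ker(B_{F_n})=n=\operatorname{ind}\mathfrak{gl}(n)$.
   Context: All Lie algebras are over $\mathbb{C}$. For $1\le i,j\le n$, $e_{i,j}$ is the matrix unit and $e_{i,j}^*$ the dual functional, $e_{i,j}^*(X)=X_{i,j}$. For a Lie algebra $\mathfrak{g}$ and $f\in\mathfrak{g}^*$, the Kirillov form is $B_f(x,y)=f([x,y])$ and $\ker(B_f)=\{x\in\mathfrak{g}: B_f(x,y)=0\ \forall y\in\mathfrak{g}\}$. The index is $\operatorname{ind}\mathfrak{g}=\min_{f\in\mathfrak{g}^*}\dim\ker(B_f)$; a functional $f$ is regular if $\dim\ker(B_f)=\operatorname{ind}\mathfrak{g}$. It is known that $\operatorname{ind}\mathfrak{gl}(n)=n$. *)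

From HB Require Import structures.
From mathcomp Require Import all_boot all_order all_algebra.
From mathcomp Require Import complex.
From mathcomp Require Import Rstruct.
Set Implicit Arguments. Unset Strict Implicit. Unset Printing Implicit Defensive.
Import Order.TTheory GRing.Theory Num.Theory.
Local Open Scope ring_scope.

Definition C : fieldType := (Rdefinitions.R)[i].

Definition gl (n : nat) := 'M[C]_n.
Definition lie_bracket (n : nat) (x y : 'M[C]_n) : 'M[C]_n := x *m y - y *m x.

Definition gl_dual (n : nat) := 'Hom('M[C]_n, C^o).

(* Kirillov form B_f(x,y) = f([x,y]), viewed as the linear map
   x |-> B_f(x, .) from gl(n) to gl(n)^*. Its kernel is ker(B_f). *)
Definition kirillov_map (n : nat) (f : gl_dual n) : 'Hom('M[C]_n, 'Hom('M[C]_n, C^o)) :=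
  linfun (fun x : 'M[C]_n => linfun (fun y : 'M[C]_n => f (lie_bracket x y) : C^o)).

Definition kirillov_ker (n : nat) (f : gl_dual n) : {vspace 'M[C]_n} :=
  lker (kirillov_map f).

(* regular: dim ker B_f equals the index, i.e. the minimum over all functionals. *)
Definition regular (n : nat) (f : gl_dual n) : Prop :=
  forall g : gl_dual n, (\dim (kirillov_ker f) <= \dim (kirillov_ker g))%N.

(* e_{i,j}^*(X) = X_{i,j}; indices are 0-based here. *)
(* F_n = sum_{i=1}^n sum_{j=1}^{n+1-i} e_{i,j}^*, i.e. (0-based) i + j <= n - 1. *)
Definition F (n : nat) : gl_dual n :=
  linfun (fun X : 'M[C]_n =>
    (\sum_(i < n) \sum_(j < n | (i + j <= n.-1)%N) X i j) : C^o).

From HB Require Import structures.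
From mathcomp Require Import all_boot all_order all_algebra.
From mathcomp Require Import complex Rstruct zify.
Set Implicit Arguments. Unset Strict Implicit. Unset Printing Implicit Defensive.
Import GRing.Theory.
Local Open Scope ring_scope.

(* Through the nondegenerate trace form <X, Y> = tr(XY), a functional g on
   gl(n) is g = tr(M_g . _) for a matrix M_g, and
   B_g(x, y) = tr(M_g [x, y]) = tr([M_g, x] y), so ker B_g is the
   centralizer of M_g, i.e. the kernel of ad M_g : X |-> M_g X - X M_g.
   The proof therefore consists of two centralizer estimates:
   - lower bound: every centralizer in gl(n, C) has dimension >= n.  By Schur
     triangularization and conjugation invariance it suffices to treat a
     triangular matrix, where peeling off the first row and column shows that
     the image of ad T has dimension <= n^2 - n;
   - upper bound: M_{F_n} is the staircase matrix S with ones on and above the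
     antidiagonal.  S is invertible, its centralizer equals that of S^-1 (the
     antidiagonal minus the next one), and a matrix commuting with S^-1 is
     determined by its first column, so the centralizer has dimension <= n. *)

Section CommutatorMap.
Variable K : fieldType.

Lemma linfunE_linear (aT rT : vectType K) (f : aT -> rT) :
  linear f -> forall x, linfun f x = f x.
Proof.
move=> fL x.
pose lf : {linear aT -> rT} := HB.pack f (GRing.isLinear.Build _ _ _ _ f fL).
exact: (lfunE lf x).
Qed.

Lemma dim_img_le (aT rT : vectType K) (f : 'Hom(aT, rT)) (U : {vspace aT}) :
  (\dim (f @: U) <= \dim U)%N.
Proof. by rewrite -(limg_ker_dim f U) leq_addl. Qed.

Definition ad n (T : 'M[K]_n) : 'End('M[K]_n) :=
  linfun (fun X : 'M[K]_n => T *m X - X *m T).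

Lemma adE n (T X : 'M[K]_n) : ad T X = T *m X - X *m T.
Proof.
apply: linfunE_linear => a x y.
by rewrite mulmxDr mulmxDl -scalemxAr -scalemxAl scalerBr opprD addrACA.
Qed.

Lemma mem_cent n (T X : 'M[K]_n) : (X \in lker (ad T)) = (T *m X == X *m T).
Proof. by rewrite memv_ker adE subr_eq0. Qed.

Lemma dim_cent_img n (T : 'M[K]_n) :
  (\dim (lker (ad T)) + \dim (ad T @: fullv) = n * n)%N.
Proof. by have := limg_ker_dim (ad T) fullv; rewrite capfv dimvf /dim /=. Qed.

(* For T block lower triangular with a 1x1 upper-left block, the image of ad T
   is at most 2k dimensions larger than that of ad of the lower-right block:
   ad T X is determined by the first row of X, by the first column of ad T X,
   and by ad T' applied to the lower-right block of X. *)
Lemma dim_img_ad_block k (a : 'M[K]_1) (c : 'M[K]_(k, 1)) (T' : 'M[K]_k) :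
  (\dim (ad (block_mx a 0 c T') @: fullv) <= k + k + \dim (ad T' @: fullv))%N.
Proof.
set T := block_mx a 0 c T'.
pose from_row : 'Hom('rV[K]_k, 'M[K]_(1 + k)) :=
  linfun (fun y => block_mx (- (y *m c)) (a *m y - y *m T') 0 (c *m y)).
pose from_col : 'Hom('cV[K]_k, 'M[K]_(1 + k)) :=
  linfun (fun z => block_mx 0 0 z 0).
pose from_block : 'Hom('M[K]_k, 'M[K]_(1 + k)) :=
  linfun (fun W => block_mx 0 0 0 W).
have from_rowE y :
    from_row y = block_mx (- (y *m c)) (a *m y - y *m T') 0 (c *m y).
  apply: linfunE_linear => r x z.
  rewrite scale_block_mx add_block_mx; congr block_mx.
  - by rewrite mulmxDl -scalemxAl scalerN opprD.
  - rewrite mulmxDr mulmxDl -scalemxAr -scalemxAl scalerBr.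
    by rewrite opprD addrACA.
  - by rewrite scaler0 addr0.
  - by rewrite mulmxDr -scalemxAr.
have from_colE z : from_col z = block_mx 0 0 z 0.
  apply: linfunE_linear => r x y.
  by rewrite scale_block_mx add_block_mx !scaler0 !addr0.
have from_blockE W : from_block W = block_mx 0 0 0 W.
  apply: linfunE_linear => r x y.
  by rewrite scale_block_mx add_block_mx !scaler0 !addr0.
have decomp X : ad T X = from_row (ursubmx X) + from_col (dlsubmx (ad T X))
                          + from_block (ad T' (drsubmx X)).
  rewrite from_rowE from_colE from_blockE !adE.
  rewrite -[X]submxK /T !mulmx_block !opp_block_mx !add_block_mx.
  rewrite !block_mxKur !block_mxKdl !block_mxKdr.
  congr block_mx.
  - have -> : a *m ulsubmx X = ulsubmx X *m a.
      by rewrite [a]mx11_scalar [ulsubmx X]mx11_scalar -!scalar_mxM mulrC.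
    by rewrite !mul0mx !addr0 opprD addrA subrr add0r.
  - by rewrite !mul0mx !mulmx0 !addr0 add0r.
  - by rewrite add0r addr0.
  - by rewrite !mulmx0 !add0r addr0 addrA.
have sub : (ad T @: fullv <= from_row @: fullv + from_col @: fullv
                               + from_block @: (ad T' @: fullv))%VS.
  apply/subvP => Y /memv_imgP [Z _ ->].
  rewrite (decomp Z); apply: memv_add; first apply: memv_add.
  - exact: memv_img (memvf _).
  - exact: memv_img (memvf _).
  - exact: memv_img (memv_img _ (memvf _)).
apply: leq_trans (dimvS sub) _.
apply: leq_trans (dimv_add_leqif _ _) _.
apply: leq_add; last exact: dim_img_le.
apply: leq_trans (dimv_add_leqif _ _) _.
apply: leq_add.
  by apply: leq_trans (dim_img_le _ _) _; rewrite dimvf /dim /= mul1n.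
by apply: leq_trans (dim_img_le _ _) _; rewrite dimvf /dim /= muln1.
Qed.

Lemma dim_cent_trig n (T : 'M[K]_n) : is_trig_mx T -> (n <= \dim (lker (ad T)))%N.
Proof.
move=> Ttrig; suff : (\dim (ad T @: fullv) + n <= n * n)%N.
  by have := dim_cent_img T; lia.
elim: n T Ttrig => [|k IH] T Ttrig.
  by rewrite addn0; apply: leq_trans (dim_img_le _ _) _; rewrite dimvf /dim.
pose T1 : 'M[K]_(1 + k) := T.
have [ur0 _ trig'] : [/\ ursubmx T1 == 0, is_trig_mx (ulsubmx T1)
                                         & is_trig_mx (drsubmx T1)].
  have : is_trig_mx T1 := Ttrig.
  by rewrite -[X in is_trig_mx X]submxK is_trig_block_mx // => /and3P.
change T with T1.
have {ur0}-> : T1 = block_mx (ulsubmx T1) 0 (dlsubmx T1) (drsubmx T1).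
  by rewrite -(eqP ur0) submxK.
have := IH _ trig'; have := dim_img_ad_block (ulsubmx T1) (dlsubmx T1) (drsubmx T1).
move: (\dim _) (\dim _) => dT dT'; lia.
Qed.

(* Conjugation by an invertible P maps the centralizer of P M P^-1
   injectively into that of M. *)
Lemma dim_cent_conj n (P M : 'M[K]_n) : P \in unitmx ->
  (\dim (lker (ad (P *m M *m invmx P))) <= \dim (lker (ad M)))%N.
Proof.
move=> Punit; set Q := invmx P.
have QP : Q *m P = 1%:M by rewrite mulVmx.
have PQ : P *m Q = 1%:M by rewrite mulmxV.
pose conj : 'End('M[K]_n) := linfun (fun X => Q *m X *m P).
have conjE X : conj X = Q *m X *m P.
  by apply: linfunE_linear => r x y; rewrite mulmxDr mulmxDl -scalemxAr -scalemxAl.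
have conj_inj : (lker (ad (P *m M *m Q)) :&: lker conj)%VS = 0%VS.
  apply/eqP; rewrite -subv0; apply/subvP => X /memv_capP [_].
  rewrite memv_ker conjE => /eqP X0.
  have : P *m (Q *m X *m P) *m Q = 0 by rewrite X0 mulmx0 mul0mx.
  by rewrite !mulmxA PQ mul1mx -mulmxA PQ mulmx1 => ->; rewrite memv0.
have conj_cent : (conj @: lker (ad (P *m M *m Q)) <= lker (ad M))%VS.
  apply/subvP => Y /memv_imgP [X]; rewrite mem_cent => /eqP XC ->.
  have conjL : Q *m (P *m M *m Q *m X) *m P = M *m (Q *m X *m P).
    by rewrite !mulmxA QP mul1mx.
  have conjR : Q *m (X *m (P *m M *m Q)) *m P = Q *m X *m P *m M.
    by rewrite !mulmxA -[_ *m Q *m P]mulmxA QP mulmx1.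
  by rewrite mem_cent conjE -conjL XC conjR.
by rewrite -(limg_dim_eq conj_inj) dimvS.
Qed.

Lemma cent_inv n (A B : 'M[K]_n) : A *m B = 1%:M -> (lker (ad A) <= lker (ad B))%VS.
Proof.
move=> AB; have BA : B *m A = 1%:M by apply: mulmx1C.
apply/subvP => X; rewrite !mem_cent => /eqP AX; apply/eqP.
rewrite -[X in X *m B]mul1mx -BA -[B *m X]mulmx1 -AB.
by rewrite !mulmxA -[B *m X *m A]mulmxA -AX !mulmxA.
Qed.

Lemma dim_cent_first_col n (B : 'M[K]_n.+1) :
  (forall X, X \in lker (ad B) -> col ord0 X = 0 -> X = 0) ->
  (\dim (lker (ad B)) <= n.+1)%N.
Proof.
move=> col_inj.
pose col0 : 'Hom('M[K]_n.+1, 'cV[K]_n.+1) := linfun (col ord0).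
have col0E X : col0 X = col ord0 X.
  by apply: linfunE_linear => r x y; apply/matrixP => i k; rewrite !mxE.
have col0_inj : (lker (ad B) :&: lker col0)%VS = 0%VS.
  apply/eqP; rewrite -subv0; apply/subvP => X /memv_capP [XB].
  by rewrite memv_ker col0E => /eqP /(col_inj X XB) ->; rewrite memv0.
rewrite -(limg_dim_eq col0_inj).
by apply: leq_trans (dimvS (subvf _)) _; rewrite dimvf /dim /= muln1.
Qed.

End CommutatorMap.

(* Over a numeric algebraically closed field such as C, every matrix is
   unitarily similar to a triangular one (Schur), so every centralizer in
   gl(n) has dimension at least n. *)
Lemma dim_cent_ge (K : numClosedFieldType) n (M : 'M[K]_n) :
  (n <= \dim (lker (ad M)))%N.
Proof.
case: n M => [//|n] M.
have [P /unitarymx_unit Punit] := Schur M (ltn0Sn n).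
rewrite /similar_to /conjmx pinvmxE // => /dim_cent_trig.
by move/leq_trans; apply; apply: dim_cent_conj.
Qed.

Lemma sum_indicator (R : pzSemiRingType) n (r : 'I_n) (c : bool)
    (P : 'I_n -> bool) (f : 'I_n -> R) :
  (forall k, P k = (k == r) && c) ->
  \sum_(k < n) f k * (P k)%:R = (if c then f r else 0).
Proof.
move=> hP; rewrite (bigD1 r) //= big1 ?addr0.
  by rewrite hP eqxx /=; case: (c); rewrite ?mulr1 ?mulr0.
by move=> k /negbTE hk; rewrite hP hk /= mulr0.
Qed.

Lemma mxtrace_mul_delta (R : pzSemiRingType) n (Z : 'M[R]_n) i j :
  \tr (Z *m delta_mx j i) = Z i j.
Proof.
rewrite /mxtrace (bigD1 i) //= big1 ?addr0.
  rewrite mxE (eq_bigr (fun l => Z i l * ((l == j) && true)%:R)).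
    by rewrite (@sum_indicator _ _ j true).
  by move=> l _; rewrite mxE eqxx !andbT.
move=> k /negbTE hk; rewrite mxE big1 // => l _.
by rewrite mxE hk andbF mulr0.
Qed.

Section TraceForm.
Variable K : fieldType.

Definition dual_mx n (g : 'Hom('M[K]_n, K^o)) : 'M[K]_n :=
  \matrix_(i, j) g (delta_mx j i).

Lemma dual_mxE n (g : 'Hom('M[K]_n, K^o)) (X : 'M[K]_n) :
  g X = \tr (dual_mx g *m X).
Proof.
rewrite {1}[X]matrix_sum_delta linear_sum /mxtrace.
under eq_bigr => i _ do rewrite linear_sum.
under [RHS]eq_bigr => i _ do rewrite mxE.
rewrite [RHS]exchange_big; apply: eq_bigr => i _; apply: eq_bigr => j _.
by rewrite linearZ /= mxE mulrC.
Qed.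

Lemma trace_form_eq0 n (Z : 'M[K]_n) :
  (forall Y, \tr (Z *m Y) = 0) -> Z = 0.
Proof. by move=> Z0; apply/matrixP => i j; rewrite -mxtrace_mul_delta Z0 mxE. Qed.

Lemma dual_mx_pattern n (P : 'I_n -> 'I_n -> bool) :
  dual_mx (linfun (fun X : 'M[K]_n => (\sum_i \sum_(j | P i j) X i j : K^o)))
  = \matrix_(i, j) (P j i)%:R.
Proof.
apply/matrixP => i j; rewrite !mxE linfunE_linear; last first.
  move=> r x y; rewrite /GRing.scale /= mulr_sumr -big_split; apply: eq_bigr => a _.
  by rewrite mulr_sumr -big_split; apply: eq_bigr => b _; rewrite !mxE.
under eq_bigr => a _ do rewrite big_mkcond /=.
rewrite (bigD1 j) //= [X in _ + X]big1 ?addr0; last first.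
  by move=> a /negbTE ja; apply: big1 => b _; rewrite mxE ja /=; case: ifP.
rewrite (bigD1 i) //= [X in _ + X]big1 ?addr0; last first.
  by move=> b /negbTE ib; rewrite mxE ib andbF; case: ifP.
by rewrite mxE !eqxx; case: ifP.
Qed.

Definition kirillov_form n (g : 'Hom('M[K]_n, K^o)) :
    'Hom('M[K]_n, 'Hom('M[K]_n, K^o)) :=
  linfun (fun x => linfun (fun y => g (x *m y - y *m x) : K^o)).

Lemma kirillov_formE n (g : 'Hom('M[K]_n, K^o)) (x y : 'M[K]_n) :
  kirillov_form g x y = \tr (ad (dual_mx g) x *m y).
Proof.
have inner_lin (u : 'M[K]_n) : linear (fun v => g (u *m v - v *m u) : K^o).
  by move=> r v1 v2; rewrite -!adE !linearP.
rewrite adE /kirillov_form !linfunE_linear //.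
  rewrite dual_mxE mulmxBr mulmxBl !mulmxA !linearB /=.
  by rewrite [\tr (_ *m y *m x)]mxtrace_mulC mulmxA.
move=> r x1 x2; apply/lfunP => z; rewrite add_lfunE scale_lfunE.
rewrite !linfunE_linear // -linearP /=; congr (g _).
by rewrite mulmxDl mulmxDr -scalemxAl -scalemxAr scalerBr opprD addrACA.
Qed.

Lemma kirillov_form_ker n (g : 'Hom('M[K]_n, K^o)) :
  lker (kirillov_form g) = lker (ad (dual_mx g)).
Proof.
apply/vspaceP => x; rewrite !memv_ker; apply/eqP/eqP => [Bx0 | adx0].
  by apply: trace_form_eq0 => y; rewrite -kirillov_formE Bx0 zero_lfunE.
by apply/lfunP => y; rewrite zero_lfunE kirillov_formE adx0 mul0mx linear0.
Qed.

End TraceForm.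

Lemma kirillov_ker_cent n (g : gl_dual n) :
  kirillov_ker g = lker (ad (dual_mx g)).
Proof. exact: kirillov_form_ker. Qed.

Section Staircase.
Variables (R : comPzRingType) (m : nat).
Local Notation N := m.+1.

Definition stair : 'M[R]_N := \matrix_(i, j) ((i + j <= m)%N)%:R.

Definition stair_inv : 'M[R]_N :=
  \matrix_(i, j) (((i + j == m)%N)%:R - ((i + j == N)%N)%:R).

Lemma sum_mul_stair_inv (f : 'I_N -> R) (j : 'I_N) :
  \sum_(k < N) f k * stair_inv k j =
  f (inord (m - j)) - (if (0 < j)%N then f (inord (N - j)) else 0).
Proof.
have lej : (j <= m)%N by rewrite -ltnS.
under eq_bigr => k _ do rewrite mxE mulrBr.
rewrite sumrB (@sum_indicator _ _ (inord (m - j)) true); last first.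
  by move=> k; rewrite andbT -val_eqE /= inordK; lia.
rewrite (@sum_indicator _ _ (inord (N - j)) (0 < j)%N
                         (fun k : 'I_N => (k + j == N)%N)) // => k.
have := ltn_ord k; case: (posnP j) => [-> | j_gt0]; first by rewrite andbF; lia.
by rewrite andbT -val_eqE /= inordK; lia.
Qed.

Lemma stair_mul_inv : stair *m stair_inv = 1%:M.
Proof.
apply/matrixP => i j; have ltj := ltn_ord j; have lti := ltn_ord i.
rewrite !mxE (sum_mul_stair_inv (stair i)) !mxE inordK; last by lia.
have -> : (i + (m - j) <= m)%N = (i <= j)%N by lia.
have -> : (if (0 < j)%N then ((i + (inord (N - j) : 'I_N) <= m)%N)%:R else 0)
          = ((i < j)%N)%:R :> R.
  case: (posnP j) => [-> | j_gt0]; first by rewrite ltn0.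
  by rewrite inordK; [congr _%:R; lia | lia].
have [<- | ne] := eqVneq i j; first by rewrite leqnn ltnn subr0.
by rewrite ltn_neqAle val_eqE ne subrr.
Qed.

(* Comparing entries of stair_inv X and X stair_inv, using the symmetry of
   stair_inv. *)
Lemma cent_stair_inv_entries (X : 'M[R]_N) :
  stair_inv *m X = X *m stair_inv -> forall i j : 'I_N,
  X i (inord (m - j)) - (if (0 < j)%N then X i (inord (N - j)) else 0) =
  X (inord (m - i)) j - (if (0 < i)%N then X (inord (N - i)) j else 0).
Proof.
move=> XB i j; have := congr1 (fun M : 'M[R]_N => M i j) XB; rewrite !mxE => e.
rewrite -(sum_mul_stair_inv (X i)) -(sum_mul_stair_inv (X ^~ j)) -e.
by apply: eq_bigr => k _; rewrite mulrC !mxE addnC.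
Qed.

(* A matrix commuting with stair_inv and vanishing in column 0 is zero:
   the entry relations force columns k and m - k to vanish, by induction
   on k. *)
Lemma cent_stair_inv_col0 (X : 'M[R]_N) :
  stair_inv *m X = X *m stair_inv -> col ord0 X = 0 -> X = 0.
Proof.
move=> XB X0; have E := cent_stair_inv_entries XB.
have C0 i : X i (inord 0) = 0.
  have := congr1 (fun v : 'cV[R]_N => v i ord0) X0; rewrite !mxE => <-.
  by congr (X i); apply: val_inj; rewrite /= inordK.
have cols k : (k <= m)%N ->
    (forall i, X i (inord k) = 0) /\ (forall i, X i (inord (m - k)) = 0).
  elim: k => [_ | k IH lt_km].
    split=> // i; have := E i (inord 0).
    by rewrite inordK // subn0 ltnn !C0 if_same !subr0.
  have [Ck Cmk] := IH (ltnW lt_km).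
  have Ck1 i : X i (inord k.+1) = 0.
    have := E i (inord (m - k)); rewrite inordK; last by lia.
    rewrite subKn ?(ltnW lt_km) // subn_gt0 lt_km.
    have -> : (N - (m - k) = k.+1)%N by lia.
    by rewrite Ck !Cmk if_same subr0 sub0r => /eqP; rewrite oppr_eq0 => /eqP.
  split=> // i; have := E i (inord k.+1); rewrite inordK; last by lia.
  by rewrite subSS /= Cmk !Ck1 if_same !subr0.
apply/matrixP => i j; rewrite mxE.
by have [/(_ i) + _] := cols j (ltn_ord j); rewrite inord_val.
Qed.
End Staircase.

Lemma dual_mx_F m : dual_mx (F m.+1) = stair C m.
Proof. by rewrite dual_mx_pattern; apply/matrixP => i j; rewrite !mxE addnC. Qed.

Theorem theorem3p16 (n : nat) (hn : (1 <= n)%N) :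
  regular (F n) /\ \dim (kirillov_ker (F n)) = n.
Proof.
case: n hn => [//|m] _.
have dimF : \dim (kirillov_ker (F m.+1)) = m.+1.
  rewrite kirillov_ker_cent dual_mx_F; apply/eqP; rewrite eqn_leq dim_cent_ge andbT.
  apply: leq_trans (dimvS (cent_inv (stair_mul_inv C m))) _.
  apply: dim_cent_first_col => X; rewrite mem_cent => /eqP.
  exact: cent_stair_inv_col0.
split=> [g|//]; rewrite dimF kirillov_ker_cent; exact: dim_cent_ge.
Qed.
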